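(* Let $I$ be an ideal on $\mathbb{N}$ with $\mathrm{Fin}\subseteq I$ and $I\neq\mathrm{Fin}$. The following are equivalent: (1) there exists a sequence $(x_n)\in\ell_1^{*}$ such that $A_I(x_n)$ is an open subset of $\mathbb{R}$; (2) $I$ is not maximal.
   Context: $\ell_1^{*}=\{(x_n)\in\ell_1 : x_n\neq 0\text{ for every }n\}$. An ideal on $\mathbb{N}$ is a family $I\subseteq P(\mathbb{N})$ closed under finite unions and subsets with $\mathbb{N}\notin I$; $\mathrm{Fin}$ is the ideal of finite sets. An ideal $I$ is maximal if there is no ideal $J$ with $I\subsetneq J$; equivalently, for every $A\subseteq\mathbb{N}$ either $A\in I$ or $\mathbb{N}\setminus A\in I$. $A_I(x_n)=\{\sum_{n\in A}x_n : A\in I\}$. *)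

From Stdlib Require Import Reals Rtopology Classical.
Open Scope R_scope.

Definition subsetN (B A : nat -> bool) : Prop := forall n, B n = true -> A n = true.
Definition unionN (A B : nat -> bool) : nat -> bool := fun n => orb (A n) (B n).
Definition fullN : nat -> bool := fun _ => true.

Definition is_ideal (I : (nat -> bool) -> Prop) : Prop :=
  (forall A B, I A -> I B -> I (unionN A B)) /\
  (forall A B, I A -> subsetN B A -> I B) /\
  ~ I fullN.

Definition finiteN (A : nat -> bool) : Prop := exists N : nat, forall n, A n = true -> (n < N)%nat.

Definition maximal_ideal (I : (nat -> bool) -> Prop) : Prop :=
  ~ exists J : (nat -> bool) -> Prop,
      is_ideal J /\ (forall A, I A -> J A) /\ (exists A, J A /\ ~ I A).

Definition in_l1 (x : nat -> R) : Prop := exists l, infinite_sum (fun n => Rabs (x n)) l.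
Definition in_l1_star (x : nat -> R) : Prop := in_l1 x /\ forall n, x n <> 0.

Definition sum_over (x : nat -> R) (A : nat -> bool) (s : R) : Prop :=
  infinite_sum (fun n => if A n then x n else 0) s.

Definition A_I (I : (nat -> bool) -> Prop) (x : nat -> R) : R -> Prop :=
  fun r => exists A, I A /\ sum_over x A r.

From Stdlib Require Import Reals Rtopology Classical Lia Lra.
From Coquelicot Require Import Coquelicot.
Open Scope R_scope.

(* If I is maximal, then the set P of indices with x_n > 0 or its complement lies in I; the
   sum of x over that set is then the largest (resp. smallest) element of A_I(x), so A_I(x)
   is not open.
   Conversely, take A with neither A nor its complement in I, and an infinite D in I (which
   exists as I <> Fin). Put the weights 1/2, 1/4, 1/8, ... on the successive elements of D,
   so that the subsums over subsets of D are exactly the numbers of [0,1] (greedy binary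
   expansion), and put +2^-n on A \ D and -2^-n off A and D. A sum over C in I splits as
   s + c with c in [0,1] coming from C /\ D. Since neither A nor its complement is covered by
   a set of I, there are indices m, m' outside C and D with x_m > 0 > x_m'; adding them to
   C \ D and filling up inside D reaches every point of [s + x_m', s + 1 + x_m], a
   neighbourhood of s + c. *)

Definition compN (A : nat -> bool) : nat -> bool := fun n => negb (A n).
Definition disjointN (A B : nat -> bool) : Prop := forall n, A n = true -> B n = false.
Definition singleN (m : nat) : nat -> bool := fun n => Nat.eqb n m.

Lemma infinite_sum_le f g a b :
  (forall n, f n <= g n) -> infinite_sum f a -> infinite_sum g b -> a <= b.
Proof. intros Hfg Ha Hb. exact (Rle_cv_lim (fun n => sum_growing f g n Hfg) Ha Hb). Qed.

Lemma infinite_sum_squeeze f l e :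
  (forall n, Rabs (sum_f_R0 f n - l) <= e (S n)) -> Un_cv e 0 -> infinite_sum f l.
Proof.
  intros He Hcv eps Heps. destruct (Hcv eps Heps) as [N HN]. exists N. intros n Hn.
  specialize (HN (S n) ltac:(lia)). specialize (He n). unfold R_dist, Rdist in *.
  rewrite Rminus_0_r in HN. pose proof (Rle_abs (e (S n))). lra.
Qed.

Lemma sum_over_exists x B : in_l1 x -> exists s, sum_over x B s.
Proof.
  intros [l Hl]. apply is_series_Reals in Hl.
  assert (Hex : ex_series (fun n => if B n then x n else 0)).
  { apply (@ex_series_le R_AbsRing R_CompleteNormedModule _ (fun n => Rabs (x n)));
      [|exists l; exact Hl].
    intro n. change norm with Rabs. destruct (B n); [lra|].
    rewrite Rabs_R0. apply Rabs_pos. }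
  destruct Hex as [s Hs]. exists s. apply is_series_Reals. exact Hs.
Qed.

Lemma sum_over_ext x y A s :
  (forall n, A n = true -> x n = y n) -> sum_over x A s -> sum_over y A s.
Proof.
  intros Hxy Hs. apply is_series_Reals. apply is_series_Reals in Hs.
  refine (is_series_ext _ _ _ _ Hs). intro n.
  destruct (A n) eqn:HAn; [apply Hxy|]; auto.
Qed.

Lemma sum_over_ext_set x A B s : (forall n, A n = B n) -> sum_over x A s -> sum_over x B s.
Proof.
  intros HAB Hs. apply is_series_Reals. apply is_series_Reals in Hs.
  refine (is_series_ext _ _ _ _ Hs). intro n. rewrite HAB. reflexivity.
Qed.

Lemma sum_over_union x A B a b : disjointN A B ->
  sum_over x A a -> sum_over x B b -> sum_over x (unionN A B) (a + b).
Proof.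
  intros HAB Ha Hb. apply is_series_Reals in Ha, Hb. apply is_series_Reals.
  refine (is_series_ext _ _ _ _ (is_series_plus _ _ _ _ Ha Hb)). intro n.
  unfold unionN, plus; simpl. specialize (HAB n).
  destruct (A n), (B n); simpl; lra.
Qed.

Lemma sum_over_single x m : sum_over x (singleN m) (x m).
Proof.
  set (f := fun n => if singleN m n then x n else 0).
  assert (Hbelow : forall j, (j < m)%nat -> sum_f_R0 f j = 0).
  { induction j as [|j IH]; intro Hj; cbn [sum_f_R0].
    - unfold f, singleN. rewrite (proj2 (Nat.eqb_neq 0 m)) by lia. reflexivity.
    - rewrite IH by lia. unfold f, singleN. rewrite (proj2 (Nat.eqb_neq (S j) m)) by lia. lra. }
  assert (Hfrom : forall k, sum_f_R0 f (m + k) = x m).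
  { induction k as [|k IH].
    - rewrite Nat.add_0_r. destruct m as [|m']; cbn [sum_f_R0].
      + unfold f, singleN. rewrite Nat.eqb_refl. reflexivity.
      + rewrite Hbelow by lia. unfold f, singleN. rewrite Nat.eqb_refl. lra.
    - rewrite Nat.add_succ_r. cbn [sum_f_R0]. rewrite IH. unfold f, singleN.
      rewrite (proj2 (Nat.eqb_neq (S (m + k)) m)) by lia. lra. }
  intros eps Heps. exists m. intros n Hn.
  replace n with (m + (n - m))%nat by lia. rewrite Hfrom.
  unfold R_dist. rewrite Rminus_diag, Rabs_R0. lra.
Qed.

Section Ideal.
Variable I : (nat -> bool) -> Prop.
Hypothesis I_union : forall A B, I A -> I B -> I (unionN A B).
Hypothesis I_subset : forall A B, I A -> subsetN B A -> I B.

Lemma not_subsetN_ideal A B : ~ I A -> I B -> exists m, A m = true /\ B m = false.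
Proof.
  intros HA HB. apply NNPP. intro Hno. apply HA, (I_subset B); auto.
  intros n Hn. destruct (B n) eqn:HBn; auto. exfalso. eauto.
Qed.

Lemma maximal_ideal_dichotomy P : ~ I fullN -> I (fun _ => false) ->
  maximal_ideal I -> I P \/ I (compN P).
Proof.
  intros Hfull Hempty Hmax. apply NNPP. intro Hneither. apply Hmax.
  exists (fun B => exists K, I K /\ subsetN B (unionN K P)).
  split; [split; [|split]|split].
  - intros B1 B2 [K1 [H1 S1]] [K2 [H2 S2]]. exists (unionN K1 K2). split; auto.
    intro n. specialize (S1 n). specialize (S2 n). unfold unionN in *.
    destruct (B1 n), (B2 n), (K1 n), (K2 n), (P n); simpl in *; auto.
  - intros B1 B2 [K [HK S1]] S2. exists K. split; auto. intros n Hn. auto.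
  - intros [K [HK Hs]]. apply Hneither. right. apply (I_subset K); auto.
    intros n Hn. specialize (Hs n eq_refl). unfold compN, unionN in *.
    destruct (P n), (K n); simpl in *; auto; discriminate.
  - intros A HA. exists A. split; auto. intros n Hn. unfold unionN. rewrite Hn. reflexivity.
  - exists P. split.
    + exists (fun _ => false). split; auto. intros n Hn. exact Hn.
    + intro HP. apply Hneither. auto.
Qed.

End Ideal.

Lemma not_maximal_ideal_split I : ~ maximal_ideal I ->
  exists A, ~ I A /\ ~ I (compN A).
Proof.
  intro Hnm. apply NNPP in Hnm. destruct Hnm as [J [[JU [JS Jfull]] [HIJ [A [HJA HIA]]]]].
  exists A. split; auto. intro HAc. apply Jfull.
  apply (JS (unionN A (compN A))); [apply JU; auto|].
  intros n _. unfold unionN, compN. destruct (A n); auto.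
Qed.

Lemma open_set_no_max E s : open_set E -> E s -> exists r, E r /\ s < r.
Proof.
  intros HE Hs. destruct (HE s Hs) as [delta Hd]. pose proof (cond_pos delta).
  exists (s + delta / 2). split; [|lra]. apply Hd. unfold disc.
  rewrite Rabs_right; lra.
Qed.

Lemma open_set_no_min E s : open_set E -> E s -> exists r, E r /\ r < s.
Proof.
  intros HE Hs. destruct (HE s Hs) as [delta Hd]. pose proof (cond_pos delta).
  exists (s - delta / 2). split; [|lra]. apply Hd. unfold disc.
  rewrite Rabs_left; lra.
Qed.

Lemma A_I_not_open_of_maximal I x : is_ideal I -> I (fun _ => false) ->
  maximal_ideal I -> in_l1 x -> ~ open_set (A_I I x).
Proof.
  intros [I_union [I_subset I_full]] Hempty Hmax Hx Hopen.
  set (P := fun n => if Rlt_dec 0 (x n) then true else false).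
  destruct (maximal_ideal_dichotomy I I_union I_subset P I_full Hempty Hmax) as [HP|HP].
  - destruct (sum_over_exists x P Hx) as [s Hs].
    destruct (open_set_no_max _ s Hopen) as [r [[B [_ Hr]] Hsr]]; [exists P; auto|].
    enough (r <= s) by lra.
    refine (infinite_sum_le _ _ _ _ _ Hr Hs). intro n.
    unfold P. destruct (B n), (Rlt_dec 0 (x n)); lra.
  - destruct (sum_over_exists x (compN P) Hx) as [s Hs].
    destruct (open_set_no_min _ s Hopen) as [r [[B [_ Hr]] Hrs]]; [exists (compN P); auto|].
    enough (s <= r) by lra.
    refine (infinite_sum_le _ _ _ _ _ Hs Hr). intro n.
    unfold compN, P. destruct (B n), (Rlt_dec 0 (x n)); simpl; lra.
Qed.

Fixpoint count_below (D : nat -> bool) (n : nat) : nat :=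
  match n with
  | O => O
  | S k => ((if D k then 1 else 0) + count_below D k)%nat
  end.

Definition dyadic_weight (D : nat -> bool) (n : nat) : R :=
  if D n then (1/2)^(S (count_below D n)) else 0.

Section Dyadic.
Variable D : nat -> bool.
Hypothesis D_infinite : ~ finiteN D.

Lemma count_below_mono n m : (n <= m)%nat -> (count_below D n <= count_below D m)%nat.
Proof. induction 1; simpl; lia. Qed.

Lemma count_below_unbounded K : exists n, (K <= count_below D n)%nat.
Proof.
  induction K as [|K [n Hn]]; [exists O; lia|].
  assert (Hnext : exists k, (n <= k)%nat /\ D k = true).
  { apply NNPP. intro Hno. apply D_infinite. exists n. intros k Hk.
    apply Nat.nlt_ge. intro Hnk. apply Hno. exists k. split; [lia | exact Hk]. }
  destruct Hnext as [k [Hnk HDk]]. exists (S k). simpl. rewrite HDk.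
  pose proof (count_below_mono n k Hnk). lia.
Qed.

Lemma half_pow_count_below_cv : Un_cv (fun n => (1/2)^(count_below D n)) 0.
Proof.
  intros eps Heps.
  destruct (pow_lt_1_zero (1/2)) with (y := eps) as [K HK]; [rewrite Rabs_right; lra | lra |].
  destruct (count_below_unbounded K) as [N HN]. exists N. intros n Hn.
  unfold R_dist. rewrite Rminus_0_r. apply HK.
  pose proof (count_below_mono N n Hn). lia.
Qed.

Lemma dyadic_weight_partial_sum n :
  sum_f_R0 (dyadic_weight D) n = 1 - (1/2)^(count_below D (S n)).
Proof.
  induction n as [|n IH]; cbn [sum_f_R0]; [|rewrite IH]; unfold dyadic_weight; simpl;
    [destruct (D O) | destruct (D (S n))]; simpl; lra.
Qed.

Lemma dyadic_weight_sum : infinite_sum (dyadic_weight D) 1.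
Proof.
  apply (infinite_sum_squeeze _ _ _ ) with (2 := half_pow_count_below_cv). intro n.
  rewrite dyadic_weight_partial_sum.
  replace (1 - (1/2)^(count_below D (S n)) - 1) with (- (1/2)^(count_below D (S n))) by ring.
  rewrite Rabs_Ropp, Rabs_right; [lra|]. apply Rle_ge, pow_le. lra.
Qed.

Lemma dyadic_subsum_bounds B c : sum_over (dyadic_weight D) B c -> 0 <= c <= 1.
Proof.
  intro Hc. assert (Hw : forall n, 0 <= dyadic_weight D n).
  { intro n. unfold dyadic_weight. destruct (D n); [apply pow_le|]; lra. }
  split.
  - refine (infinite_sum_le (fun _ => 0) _ 0 _ _ _ Hc).
    + intro n. destruct (B n); [apply Hw | lra].
    + intros eps Heps. exists O. intros n _. rewrite sum_cte. unfold R_dist.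
      rewrite Rmult_0_l, Rminus_0_r, Rabs_R0. lra.
  - refine (infinite_sum_le _ _ _ _ _ Hc dyadic_weight_sum). intro n.
    destruct (B n); [lra | apply Hw].
Qed.

Section Greedy.
Variable w : R.
Hypothesis w_range : 0 <= w <= 1.

Fixpoint greedy_partial (n : nat) : R :=
  match n with
  | O => 0
  | S k => let p := greedy_partial k in
           if Rle_dec (p + dyadic_weight D k) w then p + dyadic_weight D k else p
  end.

Definition greedy_set (n : nat) : bool :=
  D n && (if Rle_dec (greedy_partial n + dyadic_weight D n) w then true else false).

Lemma greedy_partial_succ n :
  greedy_partial (S n) = greedy_partial n + (if greedy_set n then dyadic_weight D n else 0).
Proof.
  cbn [greedy_partial]. unfold greedy_set.
  destruct (Rle_dec (greedy_partial n + dyadic_weight D n) w);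
    destruct (D n) eqn:HDn; simpl; try lra.
  unfold dyadic_weight. rewrite HDn. lra.
Qed.

Lemma greedy_gap n : 0 <= w - greedy_partial n <= (1/2)^(count_below D n).
Proof.
  induction n as [|n IH]; simpl; [lra|].
  unfold dyadic_weight. destruct (D n); simpl.
  - destruct (Rle_dec (greedy_partial n + 1/2 * (1/2)^(count_below D n)) w); lra.
  - destruct (Rle_dec (greedy_partial n + 0) w); lra.
Qed.

Lemma greedy_set_sum : sum_over (dyadic_weight D) greedy_set w.
Proof.
  apply (infinite_sum_squeeze _ _ _ ) with (2 := half_pow_count_below_cv). intro n.
  assert (Hpart : sum_f_R0 (fun k => if greedy_set k then dyadic_weight D k else 0) n
                  = greedy_partial (S n)).
  { induction n as [|n IH]; cbn [sum_f_R0].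
    - rewrite greedy_partial_succ. simpl. lra.
    - rewrite IH, (greedy_partial_succ (S n)). reflexivity. }
  rewrite Hpart. pose proof (greedy_gap (S n)). rewrite Rabs_left1; lra.
Qed.

End Greedy.

Lemma dyadic_subsum_exists w : 0 <= w <= 1 ->
  exists B, subsetN B D /\ sum_over (dyadic_weight D) B w.
Proof.
  intro Hw. exists (greedy_set w). split; [|exact (greedy_set_sum w Hw)].
  intros n. unfold greedy_set. destruct (D n); auto.
Qed.

End Dyadic.

Section Openness.
Variables (I : (nat -> bool) -> Prop) (x : nat -> R) (D : nat -> bool).
Hypothesis I_union : forall A B, I A -> I B -> I (unionN A B).
Hypothesis I_subset : forall A B, I A -> subsetN B A -> I B.
Hypothesis I_finite : forall A, finiteN A -> I A.
Hypothesis I_D : I D.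
Hypothesis x_l1 : in_l1 x.
Hypothesis D_fill : forall w, 0 <= w <= 1 -> exists B, subsetN B D /\ sum_over x B w.
Hypothesis D_bounded : forall B c, subsetN B D -> sum_over x B c -> 0 <= c <= 1.
Hypothesis outside_signs : forall B, I B ->
  exists m m', B m = false /\ B m' = false /\ 0 < x m <= 1 /\ -1 <= x m' < 0.

Lemma A_I_add_unit_interval C s : I C -> disjointN C D -> sum_over x C s ->
  forall w, 0 <= w <= 1 -> A_I I x (s + w).
Proof.
  intros HC HCD Hs w Hw. destruct (D_fill w Hw) as [B [HBD HB]].
  exists (unionN C B). split.
  - apply I_union; [exact HC | exact (I_subset D B I_D HBD)].
  - apply sum_over_union; auto. intros n Hn.
    destruct (B n) eqn:HBn; [|reflexivity].
    pose proof (HBD n HBn) as HDn. rewrite (HCD n Hn) in HDn. discriminate.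
Qed.

Lemma A_I_add_point_unit_interval C s k : I C -> disjointN C D -> sum_over x C s ->
  C k = false -> D k = false -> forall w, 0 <= w <= 1 -> A_I I x (s + x k + w).
Proof.
  intros HC HCD Hs HCk HDk. apply (A_I_add_unit_interval (unionN C (singleN k))).
  - apply I_union; [exact HC | apply I_finite]. exists (S k). intros n Hn.
    apply Nat.eqb_eq in Hn. lia.
  - intros n Hn. apply Bool.orb_true_iff in Hn as [Hn|Hn]; [exact (HCD n Hn)|].
    apply Nat.eqb_eq in Hn. subst. exact HDk.
  - apply sum_over_union; [| exact Hs | apply sum_over_single]. intros n Hn.
    unfold singleN. apply Nat.eqb_neq. intros ->. congruence.
Qed.

Lemma A_I_window C s m m' : I C -> disjointN C D -> sum_over x C s ->
  C m = false -> D m = false -> 0 <= x m <= 1 ->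
  C m' = false -> D m' = false -> -1 <= x m' <= 0 ->
  forall y, s + x m' <= y <= s + 1 + x m -> A_I I x y.
Proof.
  intros HC HCD Hs HCm HDm Hm HCm' HDm' Hm' y Hy.
  destruct (Rle_dec y s) as [Hlow|Hnlow]; [|destruct (Rle_dec y (s + 1)) as [Hmid|Hhigh]].
  - replace y with (s + x m' + (y - s - x m')) by ring.
    apply (A_I_add_point_unit_interval C); auto. lra.
  - replace y with (s + (y - s)) by ring. apply (A_I_add_unit_interval C); auto. lra.
  - replace y with (s + x m + (y - s - x m)) by ring.
    apply (A_I_add_point_unit_interval C); auto. lra.
Qed.

Lemma A_I_open : open_set (A_I I x).
Proof.
  intros t [C [HC Ht]].
  set (C0 := fun n => andb (C n) (negb (D n))).
  set (CD := fun n => andb (C n) (D n)).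
  assert (HC0 : I C0) by (apply (I_subset C); auto; intros n; unfold C0; destruct (C n); auto).
  assert (HC0D : disjointN C0 D) by (intros n; unfold C0; destruct (C n), (D n); auto).
  destruct (sum_over_exists x C0 x_l1) as [s0 Hs0].
  destruct (sum_over_exists x CD x_l1) as [c Hc].
  assert (Hc01 : 0 <= c <= 1).
  { apply (D_bounded CD); auto. intros n. unfold CD. destruct (C n), (D n); auto. }
  assert (Hsplit : t = s0 + c).
  { apply (uniqueness_sum (fun n => if C n then x n else 0)); [exact Ht|].
    apply (sum_over_ext_set x (unionN C0 CD)).
    - intro n. unfold unionN, C0, CD. destruct (C n), (D n); reflexivity.
    - apply sum_over_union; auto. intros n. unfold C0, CD. destruct (C n), (D n); auto. }
  destruct (outside_signs (unionN C0 D) (I_union _ _ HC0 I_D))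
    as [m [m' [Hm [Hm' [Hxm Hxm']]]]].
  apply Bool.orb_false_iff in Hm as [HC0m HDm].
  apply Bool.orb_false_iff in Hm' as [HC0m' HDm'].
  assert (Hr : 0 < Rmin (x m) (- x m')) by (apply Rmin_pos; lra).
  exists (mkposreal _ Hr). intros y Hy. unfold disc in Hy. simpl in Hy.
  apply Rabs_def2 in Hy. pose proof (Rmin_l (x m) (- x m')). pose proof (Rmin_r (x m) (- x m')).
  apply (A_I_window C0 s0 m m'); auto; lra.
Qed.

End Openness.

Lemma half_pow_bounds k : 0 < (1/2)^k <= 1.
Proof.
  split; [apply pow_lt; lra|].
  apply Rle_trans with (1 ^ k); [apply pow_incr; lra | rewrite pow1; lra].
Qed.

Definition dyadic_witness (D A : nat -> bool) (n : nat) : R :=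
  if D n then dyadic_weight D n else if A n then (1/2)^n else - (1/2)^n.

Lemma dyadic_witness_l1_star D A : ~ finiteN D -> in_l1_star (dyadic_witness D A).
Proof.
  intro HD. split.
  - assert (Hex : ex_series (fun n => Rabs (dyadic_witness D A n))).
    { apply (@ex_series_le R_AbsRing R_CompleteNormedModule _
               (fun n => dyadic_weight D n + (1/2)^n)).
      - intro n. change norm with Rabs. rewrite Rabs_Rabsolu. unfold dyadic_witness, dyadic_weight.
        pose proof (half_pow_bounds n). pose proof (half_pow_bounds (S (count_below D n))).
        destruct (D n); [|destruct (A n)];
          [rewrite Rabs_right | rewrite Rabs_right | rewrite Rabs_Ropp, Rabs_right]; lra.
      - apply (@ex_series_plus R_AbsRing R_NormedModule).
        + exists 1. apply is_series_Reals, dyadic_weight_sum, HD.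
        + exists (/ (1 - 1/2)). apply is_series_geom. rewrite Rabs_right; lra. }
    destruct Hex as [l Hl]. exists l. apply is_series_Reals. exact Hl.
  - intro n. unfold dyadic_witness, dyadic_weight.
    pose proof (half_pow_bounds n). pose proof (half_pow_bounds (S (count_below D n))).
    destruct (D n); [|destruct (A n)]; lra.
Qed.

Lemma dyadic_witness_open I D A : is_ideal I -> (forall B, finiteN B -> I B) ->
  I D -> ~ finiteN D -> ~ I A -> ~ I (compN A) -> open_set (A_I I (dyadic_witness D A)).
Proof.
  intros [I_union [I_subset _]] I_finite HD HDinf HA HAc.
  set (x := dyadic_witness D A).
  assert (Hx_D : forall B, subsetN B D -> forall n, B n = true -> dyadic_weight D n = x n).
  { intros B HBD n Hn. unfold x, dyadic_witness. rewrite (HBD n Hn). reflexivity. }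
  apply (A_I_open I x D); auto.
  - apply dyadic_witness_l1_star, HDinf.
  - intros w Hw. destruct (dyadic_subsum_exists D HDinf w Hw) as [B [HBD HB]].
    exists B. split; [exact HBD|]. exact (sum_over_ext _ _ _ _ (Hx_D B HBD) HB).
  - intros B c HBD Hc. apply (dyadic_subsum_bounds D HDinf B).
    refine (sum_over_ext _ _ _ _ _ Hc). intros n Hn. symmetry. exact (Hx_D B HBD n Hn).
  - intros B HB.
    destruct (not_subsetN_ideal I I_subset A (unionN B D) HA (I_union _ _ HB HD))
      as [m [HAm HBm]].
    destruct (not_subsetN_ideal I I_subset (compN A) (unionN B D) HAc (I_union _ _ HB HD))
      as [m' [HAm' HBm']].
    apply Bool.orb_false_iff in HBm as [HBm HDm].
    apply Bool.orb_false_iff in HBm' as [HBm' HDm'].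
    unfold compN in HAm'. apply Bool.negb_true_iff in HAm'.
    exists m, m'. unfold x, dyadic_witness. rewrite HDm, HAm, HDm', HAm'.
    pose proof (half_pow_bounds m). pose proof (half_pow_bounds m').
    repeat split; auto; lra.
Qed.

Theorem mainTheorem14 (I : (nat -> bool) -> Prop)
  (hI : is_ideal I)
  (hFin : forall A, finiteN A -> I A)
  (hneq : ~ (forall A, I A <-> finiteN A)) :
  (exists x : nat -> R, in_l1_star x /\ open_set (A_I I x)) <-> ~ maximal_ideal I.
Proof.
  split.
  - intros [x [[Hx _] Hopen]] Hmax.
    assert (Hempty : I (fun _ => false)) by (apply hFin; exists O; discriminate).
    exact (A_I_not_open_of_maximal I x hI Hempty Hmax Hx Hopen).
  - intro Hnm. destruct (not_maximal_ideal_split I Hnm) as [A [HA HAc]].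
    assert (Hinf : exists D, I D /\ ~ finiteN D).
    { apply NNPP. intro Hno. apply hneq. intro B. split; [|apply hFin].
      intro HB. apply NNPP. intro HBinf. apply Hno. exists B. auto. }
    destruct Hinf as [D [HD HDinf]].
    exists (dyadic_witness D A). split.
    + apply dyadic_witness_l1_star, HDinf.
    + apply dyadic_witness_open; auto.
Qed.
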